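(* Consider the PSSG described in the context in the FULL-FULL scenario: $k_1\mu_1>2L\lambda$ and $k_2\mu_2>2L\lambda$. Define $$\theta^L_2=-\frac{k_q q_1(2L)+k_l(x_2-x_1)}{k_p d},\qquad \theta^R_2=\frac{k_q q_2(2L)+k_l(x_2-x_1)}{k_p d}.$$ If $p_1-p_2\in[\theta^R_2,\,p_{\max}-p_{\min}]$, then at the Nash equilibrium of the PSSG every PEV selects station 2. If $p_1-p_2\in[p_{\min}-p_{\max},\,\theta^L_2]$, then at the Nash equilibrium of the PSSG every PEV selects station 1.
   Context: The system is the segment $[-L,L]$ ($L>0$) with two charging stations located at $x_1<x_2$, $-L<x_1<x_2<L$. Station $i\in\{1,2\}$ has $k_i\ge 1$ (integer) identical charging ports, PEV service times with mean $1/\mu_i$ ($\mu_i>0$) and variance $\sigma_i^2$, and announces a price $p_i\in[p_{\min},p_{\max}]$. A continuum of PEVs is uniformly distributed on $[-L,L]$, generating charging requests at rate $\lambda>0$ per unit length. Each PEV at location $x$ selects station 1 or 2, possibly at random; a strategy profile is described by the probability $\omega(x)\in[0,1]$ that the PEV at $x$ selects station 1. Let $a_1=\int_{-L}^{L}\omega(x)\,dx$ and $a_2=2L-a_1$. For $0\le a<k_i\mu_i/\lambda$, $$q_i(a)=\frac{a\lambda\,(\sigma_i^2+\frac{1}{\mu_i^2})\,\rho^{k_i-1}}{2(k_i-1)!\,(k_i-\rho)^2\Big[\sum_{m=0}^{k_i-1}\frac{\rho^m}{m!}+\frac{\rho^{k_i}}{(k_i-1)!(k_i-\rho)}\Big]},\qquad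 \rho=\frac{a\lambda}{\mu_i},$$ is the mean waiting time at station $i$, and $q_i(a)=+\infty$ if $a\ge k_i\mu_i/\lambda$. Given $a_1,a_2$ (which a single PEV cannot change), a PEV at $x$ selecting station $i$ gets payoff $U(i;x)=-k_l|x-x_i|-k_q\,q_i(a_i)-k_p\,d\,p_i$, with constants $k_l,k_q,k_p,d>0$; a randomized choice yields the expected payoff. A Nash equilibrium of the PSSG is a profile in which every PEV's (possibly mixed) choice maximizes its expected payoff given $a_1,a_2$. *)

From HB Require Import structures.
From mathcomp Require Import all_boot all_order all_algebra.
From mathcomp Require Import all_classical all_reals all_analysis.
Set Implicit Arguments. Unset Strict Implicit. Unset Printing Implicit Defensive.
Import Order.TTheory GRing.Theory Num.Theory.
Local Open Scope classical_set_scope.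
Local Open Scope ring_scope.

Section PSSG.
Variable R : realType.

(* Finite branch of the mean waiting time q_i(a) (M/G/k approximation);
   k = number of ports, mu = service rate, s2 = variance sigma_i^2 of the
   service time, lam = request rate per unit length, a = attracted length. *)
Definition qform (k : nat) (mu s2 lam a : R) : R :=
  let rho := a * lam / mu in
  (a * lam * (s2 + 1 / mu ^+ 2) * rho ^+ k.-1) /
  (2 * (k.-1)`!%:R * (k%:R - rho) ^+ 2 *
     (\sum_(m < k) rho ^+ m / (m`!)%:R
      + rho ^+ k / ((k.-1)`!%:R * (k%:R - rho)))).

Definition qwait (k : nat) (mu s2 lam a : R) : \bar R :=
  if a < k%:R * mu / lam then (qform k mu s2 lam a)%:E else +oo%E.

Definition payoff (kl kq kp d xi pi : R) (q : \bar R) (x : R) : \bar R :=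
  ((- kl * `|x - xi| - kp * d * pi)%:E - (kq%:E * q))%E.

Definition a1_of (L : R) (omega : R -> R) : R :=
  fine (\int[@lebesgue_measure R]_(x in `[(- L)%R, L]%classic) (omega x)%:E)%E.

(* Nash equilibrium of the PSSG: omega is a (measurable) strategy profile
   with values in [0,1], and for every PEV x in [-L,L] the probability
   omega x maximizes its expected payoff, given a_1 and a_2 = 2L - a_1. *)
Definition is_NE (L lam : R) (k1 k2 : nat) (mu1 mu2 s21 s22 : R)
  (x1 x2 p1 p2 kl kq kp d : R) (omega : R -> R) : Prop :=
  measurable_fun `[- L, L] omega /\
  (forall x, x \in `[- L, L] -> 0 <= omega x <= 1) /\
  let a1 := a1_of L omega in
  let a2 := 2 * L - a1 in
  let U1 := payoff kl kq kp d x1 p1 (qwait k1 mu1 s21 lam a1) in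
  let U2 := payoff kl kq kp d x2 p2 (qwait k2 mu2 s22 lam a2) in
  let EU w x := ((w%:E * U1 x) + ((1 - w)%:E * U2 x))%E in
  forall x, x \in `[- L, L] ->
    forall w, 0 <= w <= 1 -> (EU w x <= EU (omega x) x)%E.

End PSSG.

From mathcomp Require Import all_boot all_order all_algebra.
From mathcomp Require Import all_classical all_reals all_analysis.
From mathcomp Require Import ring lra measurable_realfun.
Set Implicit Arguments. Unset Strict Implicit. Unset Printing Implicit Defensive.
Import Order.TTheory GRing.Theory Num.Theory.
Local Open Scope classical_set_scope.
Local Open Scope ring_scope.

(* Writing rho = a lam / mu, the waiting time is
   q(a) = mu (s2 + 1/mu^2) / g(rho) with
   g(rho) = 2 (k-1)! (k - rho)^2 S(rho) / rho^k + 2 (k - rho),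
   where S is the truncated exponential series.  Every term of
   S(rho) / rho^k is a negative power of rho, so g decreases on (0, k) and
   q increases on [0, k mu / lam).  Hence in the FULL-FULL regime a station
   is least congested when it attracts nobody and most congested when it
   attracts every PEV.  If p1 - p2 >= thetaR, even the worst congestion
   q2(2L) at station 2 together with the extra distance (at most x2 - x1)
   does not outweigh the price gap, so station 2 is weakly preferred by
   every PEV whatever the profile, and strictly preferred as soon as some
   mass a1 > 0 of PEVs uses station 1; thus a1 = 0 at any equilibrium, i.e.
   omega = 0 almost everywhere.  The case p1 - p2 <= thetaL is symmetric. *)

Section WaitingTime.
Variable R : realType.

Definition exp_partial (n : nat) (r : R) := \sum_(m < n.+1) r ^+ m / (m`!)%:R.

Lemma exp_partial_ge1 n (r : R) : 0 <= r -> 1 <= exp_partial n r.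
Proof.
move=> r0; rewrite /exp_partial big_ord_recl /= expr0 fact0 divr1 lerDl.
by apply: sumr_ge0 => i _; rewrite divr_ge0 ?exprn_ge0 ?ler0n.
Qed.

Lemma exp_partial_gt0 n (r : R) : 0 <= r -> 0 < exp_partial n r.
Proof. by move=> r0; exact: lt_le_trans ltr01 (exp_partial_ge1 n r0). Qed.

Lemma expr_ratio_le (i j : nat) (r t : R) : 0 < r -> r <= t ->
  t ^+ i / t ^+ (i + j) <= r ^+ i / r ^+ (i + j).
Proof.
move=> r0 rt; have t0 : 0 < t by apply: lt_le_trans rt.
rewrite !exprD !invfM !mulrA !divff ?mul1r ?expf_neq0 ?gt_eqF //.
rewrite lef_pV2 ?posrE ?exprn_gt0 //.
by apply: lerXn2r => //; rewrite ?nnegrE ltW.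
Qed.

Lemma exp_partial_ratio_le n (r t : R) : 0 < r -> r <= t ->
  exp_partial n t / t ^+ n.+1 <= exp_partial n r / r ^+ n.+1.
Proof.
move=> r0 rt; rewrite /exp_partial !mulr_suml; apply: ler_sum => i _.
rewrite (mulrAC (t ^+ i)) (mulrAC (r ^+ i)) ler_wpM2r ?invr_ge0 ?ler0n //.
by have := @expr_ratio_le i (n.+1 - i) r t r0 rt; rewrite subnKC // ltnW.
Qed.

Definition wait_denom n (r : R) :=
  2 * (n`!)%:R * (n.+1%:R - r) ^+ 2 * (exp_partial n r / r ^+ n.+1)
  + 2 * (n.+1%:R - r).

Lemma wait_denom_gt0 n (r : R) : 0 < r -> r < n.+1%:R -> 0 < wait_denom n r.
Proof.
move=> r0 rn; have nr0 : 0 < n.+1%:R - r by rewrite subr_gt0.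
have S0 := exp_partial_gt0 n (ltW r0).
rewrite /wait_denom ltr_wpDl ?mulr_gt0 //.
by rewrite mulr_ge0 ?divr_ge0 ?exprn_ge0 ?sqr_ge0 ?mulr_ge0 ?ler0n ?ltW.
Qed.

Lemma wait_denom_lt n (r t : R) : 0 < r -> r < t -> t < n.+1%:R ->
  wait_denom n t < wait_denom n r.
Proof.
move=> r0 rt tn; have t0 : 0 < t by apply: lt_trans rt.
have ratio_le := exp_partial_ratio_le n r0 (ltW rt).
have ratio_ge0 : 0 <= exp_partial n t / t ^+ n.+1.
  by rewrite divr_ge0 ?exprn_ge0 ?ltW ?exp_partial_gt0 ?ltW.
have fact_gt0 : 0 < (n`!)%:R :> R by rewrite ltr0n fact_gt0.
have sq_le : (n.+1%:R - t) ^+ 2 <= (n.+1%:R - r) ^+ 2 :> R.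
  by rewrite ler_sqr ?nnegrE; lra.
have := ler_pM (sqr_ge0 _) ratio_ge0 sq_le ratio_le.
move/(ler_wpM2l (mulr_ge0 (ler0n R 2) (ltW fact_gt0))).
by rewrite /wait_denom -!mulrA; lra.
Qed.

Lemma qform_wait_denomE n (mu s2 lam a : R) :
  0 < mu -> 0 < lam -> 0 < a -> a < n.+1%:R * mu / lam ->
  qform n.+1 mu s2 lam a = mu * (s2 + 1 / mu ^+ 2) / wait_denom n (a * lam / mu).
Proof.
move=> mu0 lam0 a0 an; rewrite /qform /wait_denom /= -/(exp_partial n _).
set r := a * lam / mu; set S := exp_partial n r; set F := (n`!)%:R.
have r0 : 0 < r by rewrite divr_gt0 ?mulr_gt0.
have rn : r < n.+1%:R by rewrite ltr_pdivrMr // -ltr_pdivlMr.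
have -> : a * lam = r * mu by rewrite /r mulrVK ?unitfE ?gt_eqF.
have S0 : 0 < S by exact: exp_partial_gt0 (ltW r0).
have F0 : 0 < F by rewrite ltr0n fact_gt0.
have nr0 : 0 < n.+1%:R - r by rewrite subr_gt0.
have rn0 : 0 < r ^+ n by rewrite exprn_gt0.
rewrite !(exprS r n); set P := r ^+ n in rn0 *; field.
clearbody r S F P.
by rewrite nat1r !gt_eqF // ?addr_gt0 ?mulr_gt0 ?exprn_gt0.
Qed.

Lemma qform0 k (mu s2 lam : R) : qform k mu s2 lam 0 = 0.
Proof. by rewrite /qform /= !mul0r. Qed.

Section Monotone.
Variables (k : nat) (mu s2 lam : R).
Hypotheses (k_gt0 : (0 < k)%N) (mu_gt0 : 0 < mu) (lam_gt0 : 0 < lam) (s2_ge0 : 0 <= s2).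

Lemma qform_gt0 a : 0 < a -> a < k%:R * mu / lam -> 0 < qform k mu s2 lam a.
Proof.
move: k_gt0; case: k => // n _ a0 an; rewrite qform_wait_denomE //.
have r0 : 0 < a * lam / mu by rewrite divr_gt0 ?mulr_gt0.
have rn : a * lam / mu < n.+1%:R by rewrite ltr_pdivrMr // -ltr_pdivlMr.
by rewrite divr_gt0 ?wait_denom_gt0 // mulr_gt0 // ltr_wpDl // divr_gt0 ?exprn_gt0.
Qed.

Lemma qform_ge0 a : 0 <= a -> a < k%:R * mu / lam -> 0 <= qform k mu s2 lam a.
Proof.
rewrite le_eqVlt => /orP[/eqP <- _|a0 ak]; first by rewrite qform0.
exact/ltW/qform_gt0.
Qed.

Lemma qform_lt a b : 0 <= a -> a < b -> b < k%:R * mu / lam ->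
  qform k mu s2 lam a < qform k mu s2 lam b.
Proof.
rewrite le_eqVlt => /orP[/eqP <- b0 bk|a0 ab bk]; first by rewrite qform0 qform_gt0.
move: k_gt0 bk; case: k => // n _ bk.
have ak : a < n.+1%:R * mu / lam by apply: lt_trans bk.
rewrite !qform_wait_denomE //; last exact: lt_trans ab.
have r0 : 0 < a * lam / mu by rewrite divr_gt0 ?mulr_gt0.
have rt : a * lam / mu < b * lam / mu by rewrite ltr_pM2r ?invr_gt0 // ltr_pM2r.
have tn : b * lam / mu < n.+1%:R by rewrite ltr_pdivrMr // -ltr_pdivlMr.
rewrite ltr_pM2l ?mulr_gt0 ?ltr_wpDl ?divr_gt0 ?exprn_gt0 //.
by rewrite ltf_pV2 ?posrE ?wait_denom_lt ?wait_denom_gt0 //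
  ?(lt_trans r0 rt) ?(lt_trans rt tn).
Qed.

End Monotone.

Lemma lt_capacity (lam a b c : R) : 0 < lam -> b * lam < c -> a <= b -> a < c / lam.
Proof.
by move=> lam0 bc ab; rewrite ltr_pdivlMr //; apply: le_lt_trans bc; rewrite ler_pM2r.
Qed.

Lemma qwait_EFin k (mu s2 lam a : R) : a < k%:R * mu / lam ->
  qwait k mu s2 lam a = (qform k mu s2 lam a)%:E.
Proof. by move=> a_lt; rewrite /qwait a_lt. Qed.

End WaitingTime.

Local Notation segment L := [set` `[(- L)%R, L%R]].

Section ProfileMass.
Variable R : realType.
Local Notation leb := (@lebesgue_measure R).

Lemma ae_eq0_integral0 (dT : measure_display) (T : measurableType dT)
    (mu : {measure set T -> \bar R}) (D : set T) (f : T -> R) :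
  measurable D -> measurable_fun D f -> (forall x, D x -> 0 <= f x) ->
  (\int[mu]_(x in D) (f x)%:E = 0)%E -> {ae mu, forall x, D x -> f x = 0}.
Proof.
move=> mD mf f_ge0 int0.
have mEf : measurable_fun D (EFin \o f) by exact/measurable_EFinP.
have int_abs0 : (\int[mu]_(x in D) `|(EFin \o f) x| = 0)%E.
  rewrite -int0; apply: eq_integral => x /[1!inE] Dx.
  by rewrite /= ger0_norm ?f_ge0.
apply: filterS ((ae_eq_integral_abs mu mD mEf).1 int_abs0) => x fx0 Dx.
by have [] := fx0 Dx.
Qed.

Lemma lebesgue_segment (L : R) : 0 < L -> leb (segment L) = (2 * L)%:E.
Proof.
move=> L0; rewrite lebesgue_measure_itv /= ifT; last by rewrite lte_fin; lra.
by rewrite -EFinB; congr (_%:E); lra.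
Qed.

Lemma integral_segment_cst (L : R) (c : \bar R) : 0 < L ->
  (\int[leb]_(x in segment L) cst c x = c * (2 * L)%:E)%E.
Proof.
move=> L0; rewrite (@integral_cst _ _ _ leb _ (measurable_itv `[- L, L])).
by congr (_ * _)%E; exact: lebesgue_segment.
Qed.

Lemma a1_of_cst (L c : R) : 0 < L -> a1_of L (fun _ => c) = c * (2 * L).
Proof. by move=> L0; rewrite /a1_of (integral_segment_cst c%:E L0). Qed.

Section Profile.
Variables (L : R) (omega : R -> R).
Hypotheses (L_gt0 : 0 < L) (omega_mfun : measurable_fun (segment L) omega)
  (omega01 : forall x, x \in `[- L, L] -> 0 <= omega x <= 1).

Let msegment : measurable (segment L). Proof. exact: measurable_itv. Qed.

Let integrable_one : leb.-integrable (segment L) (EFin \o cst (1 : R)).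
Proof.
apply/integrableP; split; first exact/measurable_EFinP/measurable_cst.
rewrite (eq_integral (cst 1%E)); last by move=> x _; rewrite /= normr1.
by rewrite integral_segment_cst // mul1e ltry.
Qed.

Lemma profile_integrable : leb.-integrable (segment L) (EFin \o omega).
Proof.
apply: (@le_integrable _ _ _ leb _ msegment _ (EFin \o cst 1)) integrable_one.
  exact/measurable_EFinP.
by move=> x /= /omega01 /andP[w0 w1]; rewrite normr1 lee_fin ger0_norm.
Qed.

Lemma profile_integralE :
  (\int[leb]_(x in segment L) (omega x)%:E = (a1_of L omega)%:E)%E.
Proof.
by rewrite /a1_of fineK // (@integrable_fin_num _ _ _ leb _ msegment _ profile_integrable).
Qed.

Lemma a1_of_ge0 : 0 <= a1_of L omega.
Proof.
rewrite -lee_fin -profile_integralE.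
by apply: integral_ge0 => x /= /omega01 /andP[w0 _]; rewrite lee_fin.
Qed.

Lemma a1_of_le : a1_of L omega <= 2 * L.
Proof.
rewrite -lee_fin -profile_integralE -[(2 * L)%:E]mul1e -integral_segment_cst //.
apply: (@ge0_le_integral _ _ _ leb _ msegment).
- by move=> x /= /omega01 /andP[w0 _]; rewrite lee_fin.
- exact/measurable_EFinP.
- exact: measurable_cst.
- by move=> x /= /omega01 /andP[_ w1]; rewrite lee_fin.
Qed.

Lemma a1_of_eq0_ae : a1_of L omega = 0 ->
  {ae leb, forall x, x \in `[- L, L] -> omega x = 0}.
Proof.
move=> a0; apply: (@ae_eq0_integral0 _ _ leb _ _ msegment omega_mfun).
- by move=> x /omega01 /andP[].
- by rewrite profile_integralE a0.
Qed.

Lemma a1_of_eq_ae1 : a1_of L omega = 2 * L ->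
  {ae leb, forall x, x \in `[- L, L] -> omega x = 1}.
Proof.
move=> a2L; have mcompl : measurable_fun (segment L) (fun x => 1 - omega x).
  by apply: measurable_funB => //; exact: measurable_cst.
apply: filterS (@ae_eq0_integral0 _ _ leb _ _ msegment mcompl _ _)
  => [x h xI|x /omega01 /andP[_]|].
- by apply/eqP; rewrite eq_sym -subr_eq0 h.
- by rewrite subr_ge0.
under eq_integral do rewrite EFinB.
rewrite (@integralB_EFin _ _ _ leb _ (fun=> 1) omega msegment integrable_one
  profile_integrable).
by rewrite profile_integralE a2L integral_segment_cst // mul1e -EFinB subrr.
Qed.

End Profile.
End ProfileMass.

Section Payoff.
Variable R : realType.

Definition payoffR (kl kq kp d xi pi q x : R) : R :=
  - kl * `|x - xi| - kp * d * pi - kq * q.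

Lemma payoffR_lt (kl kq kp d xi pi q q' x : R) : 0 < kq -> q < q' ->
  payoffR kl kq kp d xi pi q' x < payoffR kl kq kp d xi pi q x.
Proof. by move=> kq0 qq'; rewrite /payoffR ltrD2l ltrN2 ltr_pM2l. Qed.

Lemma payoffR_le_switch (kl kq kp d xi xj pi pj qi qj x : R) :
  0 <= kl -> 0 <= kq -> 0 <= qi ->
  kq * qj + kl * `|xi - xj| <= kp * d * (pi - pj) ->
  payoffR kl kq kp d xi pi qi x <= payoffR kl kq kp d xj pj qj x.
Proof.
move=> kl0 kq0 qi0 gap; rewrite /payoffR.
have := ler_wpM2l kl0 (ler_distD xi x xj).
have := mulr_ge0 kq0 qi0.
nra.
Qed.

Definition mix (w u v : R) := w * u + (1 - w) * v.

Lemma mix0 (u v : R) : mix 0 u v = v.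
Proof. by rewrite /mix mul0r subr0 mul1r add0r. Qed.

Lemma mix1 (u v : R) : mix 1 u v = u.
Proof. by rewrite /mix mul1r subrr mul0r addr0. Qed.

Lemma mix_le_r (w u v : R) : 0 <= w -> u <= v -> mix w u v <= v.
Proof. by rewrite /mix; nra. Qed.

Lemma mix_le_l (w u v : R) : w <= 1 -> v <= u -> mix w u v <= u.
Proof. by rewrite /mix; nra. Qed.

Lemma mix_ge_r (w u v : R) : 0 <= w -> u < v -> v <= mix w u v -> w = 0.
Proof. by rewrite /mix => *; apply/eqP; rewrite eq_le; apply/andP; split; nra. Qed.

Lemma mix_ge_l (w u v : R) : w <= 1 -> v < u -> u <= mix w u v -> w = 1.
Proof. by rewrite /mix => *; apply/eqP; rewrite eq_le; apply/andP; split; nra. Qed.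

End Payoff.

Section Equilibrium.
Variables (R : realType) (L lam : R) (k1 k2 : nat).
Variables (mu1 mu2 s21 s22 x1 x2 p1 p2 kl kq kp d : R).
Hypotheses (L_gt0 : 0 < L) (lam_gt0 : 0 < lam).
Hypotheses (full1 : 2 * L * lam < k1%:R * mu1) (full2 : 2 * L * lam < k2%:R * mu2).

Local Notation U1 a := (payoffR kl kq kp d x1 p1 (qform k1 mu1 s21 lam a)).
Local Notation U2 a := (payoffR kl kq kp d x2 p2 (qform k2 mu2 s22 lam a)).
Local Notation NE := (is_NE L lam k1 k2 mu1 mu2 s21 s22 x1 x2 p1 p2 kl kq kp d).

Lemma expected_payoffE a x w : 0 <= a <= 2 * L ->
  (w%:E * payoff kl kq kp d x1 p1 (qwait k1 mu1 s21 lam a) x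
   + (1 - w)%:E * payoff kl kq kp d x2 p2 (qwait k2 mu2 s22 lam (2 * L - a)) x)%E
  = (mix w (U1 a x) (U2 (2 * L - a) x))%:E.
Proof.
move=> /andP[a0 a2L].
have cap1 := lt_capacity lam_gt0 full1 a2L.
have cap2 : 2 * L - a < k2%:R * mu2 / lam.
  by apply: (lt_capacity lam_gt0 full2); rewrite gerBl.
by rewrite !qwait_EFin.
Qed.

Lemma is_NEP omega : NE omega <->
  [/\ measurable_fun (segment L) omega,
      forall x, x \in `[- L, L] -> 0 <= omega x <= 1 &
      forall x, x \in `[- L, L] -> forall w, 0 <= w <= 1 ->
        mix w (U1 (a1_of L omega) x) (U2 (2 * L - a1_of L omega) x)
        <= mix (omega x) (U1 (a1_of L omega) x) (U2 (2 * L - a1_of L omega) x)].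
Proof.
have a1_itv : measurable_fun (segment L) omega ->
    (forall x, x \in `[- L, L] -> 0 <= omega x <= 1) -> 0 <= a1_of L omega <= 2 * L.
  move=> omega_mfun omega01.
  by rewrite (a1_of_ge0 L_gt0 omega_mfun omega01) (a1_of_le L_gt0 omega_mfun omega01).
rewrite /is_NE; cbv zeta.
split=> [[omega_mfun [omega01 opt]] | [omega_mfun omega01 opt]]; do ![split=> //];
  move=> x xI w w01; have := opt x xI w w01;
  by rewrite !expected_payoffE ?lee_fin ?a1_itv.
Qed.

Lemma is_NE_cst0 : (forall x, x \in `[- L, L] -> U1 0 x <= U2 (2 * L) x) ->
  NE (fun _ => 0).
Proof.
move=> pref2; apply/is_NEP; split=> [|x _|x xI w /andP[w0 _]].
- exact: measurable_cst.
- by rewrite lexx ler01.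
- by rewrite a1_of_cst // mul0r subr0 mix0 mix_le_r ?pref2.
Qed.

Lemma is_NE_cst1 : (forall x, x \in `[- L, L] -> U2 0 x <= U1 (2 * L) x) ->
  NE (fun _ => 1).
Proof.
move=> pref1; apply/is_NEP; split=> [|x _|x xI w /andP[_ w1]].
- exact: measurable_cst.
- by rewrite lexx ler01.
- by rewrite a1_of_cst // mul1r subrr mix1 mix_le_l ?pref1.
Qed.

Lemma is_NE_ae0 omega :
  (forall a x, 0 < a <= 2 * L -> x \in `[- L, L] -> U1 a x < U2 (2 * L - a) x) ->
  NE omega -> {ae @lebesgue_measure R, forall x, x \in `[- L, L] -> omega x = 0}.
Proof.
move=> pref2 /is_NEP[omega_mfun omega01 opt].
have a0 := a1_of_ge0 L_gt0 omega_mfun omega01.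
have a2L := a1_of_le L_gt0 omega_mfun omega01.
move: (a0); rewrite le_eqVlt => /predU1P[a_eq0|a_gt0].
  exact: a1_of_eq0_ae.
apply: aeW => x xI; have /andP[w0 _] := omega01 x xI.
have pref : U1 (a1_of L omega) x < U2 (2 * L - a1_of L omega) x.
  by apply: pref2 xI; rewrite a_gt0 a2L.
apply: mix_ge_r w0 pref _.
by have := opt x xI 0; rewrite lexx ler01 mix0; apply.
Qed.

Lemma is_NE_ae1 omega :
  (forall a x, 0 <= a < 2 * L -> x \in `[- L, L] -> U2 (2 * L - a) x < U1 a x) ->
  NE omega -> {ae @lebesgue_measure R, forall x, x \in `[- L, L] -> omega x = 1}.
Proof.
move=> pref1 /is_NEP[omega_mfun omega01 opt].
have a0 := a1_of_ge0 L_gt0 omega_mfun omega01.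
have a2L := a1_of_le L_gt0 omega_mfun omega01.
move: (a2L); rewrite le_eqVlt => /predU1P[a_eq2L|a_lt].
  exact: a1_of_eq_ae1.
apply: aeW => x xI; have /andP[_ w1] := omega01 x xI.
have pref : U2 (2 * L - a1_of L omega) x < U1 (a1_of L omega) x.
  by apply: pref1 xI; rewrite a0 a_lt.
apply: mix_ge_l w1 pref _.
by have := opt x xI 1; rewrite lexx ler01 mix1; apply.
Qed.

Section Dominance.
Hypotheses (k1_gt0 : (0 < k1)%N) (k2_gt0 : (0 < k2)%N).
Hypotheses (mu1_gt0 : 0 < mu1) (mu2_gt0 : 0 < mu2).
Hypotheses (s21_ge0 : 0 <= s21) (s22_ge0 : 0 <= s22).
Hypotheses (x12 : x1 < x2) (kl_gt0 : 0 < kl) (kq_gt0 : 0 < kq).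

Let dist12 : `|x1 - x2| = x2 - x1. Proof. by rewrite distrC gtr0_norm ?subr_gt0. Qed.
Let dist21 : `|x2 - x1| = x2 - x1. Proof. by rewrite gtr0_norm ?subr_gt0. Qed.

Lemma station2_dominant :
  kq * qform k2 mu2 s22 lam (2 * L) + kl * (x2 - x1) <= kp * d * (p1 - p2) ->
  NE (fun _ => 0) /\
  forall omega, NE omega ->
    {ae @lebesgue_measure R, forall x, x \in `[- L, L] -> omega x = 0}.
Proof.
move=> gap.
have pref2 a x : 0 <= a <= 2 * L -> U1 a x <= U2 (2 * L) x.
  move=> /andP[a0 a2L].
  apply: payoffR_le_switch; rewrite ?dist12 ?(ltW kl_gt0) ?(ltW kq_gt0) //.
  by apply: qform_ge0 => //; exact: lt_capacity lam_gt0 full1 a2L.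
split=> [|omega]; first by apply: is_NE_cst0 => x _; rewrite pref2 ?lexx ?mulr_ge0 ?ltW.
apply: is_NE_ae0 => a x /andP[a0 a2L] _.
apply: (le_lt_trans (pref2 a x _)); first by rewrite ltW.
apply: payoffR_lt => //; apply: qform_lt => //.
- by rewrite subr_ge0.
- by rewrite ltrBlDr ltrDl.
- by apply: lt_capacity lam_gt0 full2 _.
Qed.

Lemma station1_dominant :
  kq * qform k1 mu1 s21 lam (2 * L) + kl * (x2 - x1) <= kp * d * (p2 - p1) ->
  NE (fun _ => 1) /\
  forall omega, NE omega ->
    {ae @lebesgue_measure R, forall x, x \in `[- L, L] -> omega x = 1}.
Proof.
move=> gap.
have pref1 b x : 0 <= b <= 2 * L -> U2 b x <= U1 (2 * L) x.
  move=> /andP[b0 b2L].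
  apply: payoffR_le_switch; rewrite ?dist21 ?(ltW kl_gt0) ?(ltW kq_gt0) //.
  by apply: qform_ge0 => //; exact: lt_capacity lam_gt0 full2 b2L.
split=> [|omega]; first by apply: is_NE_cst1 => x _; rewrite pref1 ?lexx ?mulr_ge0 ?ltW.
apply: is_NE_ae1 => a x /andP[a0 a2L] _.
apply: (le_lt_trans (pref1 _ x _)).
  by rewrite subr_ge0 ltW //= gerBl.
apply: payoffR_lt => //; apply: qform_lt => //.
exact: lt_capacity lam_gt0 full1 _.
Qed.

End Dominance.
End Equilibrium.

Theorem theorem3 (R : realType) (L lam : R) (k1 k2 : nat)
  (mu1 mu2 s21 s22 x1 x2 pmin pmax p1 p2 kl kq kp d : R) :
  0 < L -> 0 < lam ->
  (1 <= k1)%N -> (1 <= k2)%N ->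
  0 < mu1 -> 0 < mu2 -> 0 <= s21 -> 0 <= s22 ->
  - L < x1 -> x1 < x2 -> x2 < L ->
  pmin <= p1 <= pmax -> pmin <= p2 <= pmax ->
  0 < kl -> 0 < kq -> 0 < kp -> 0 < d ->
  (* FULL-FULL scenario *)
  2 * L * lam < k1%:R * mu1 -> 2 * L * lam < k2%:R * mu2 ->
  let thetaL := - (kq * qform k1 mu1 s21 lam (2 * L) + kl * (x2 - x1)) / (kp * d) in
  let thetaR := (kq * qform k2 mu2 s22 lam (2 * L) + kl * (x2 - x1)) / (kp * d) in
  (thetaR <= p1 - p2 <= pmax - pmin ->
     is_NE L lam k1 k2 mu1 mu2 s21 s22 x1 x2 p1 p2 kl kq kp d (fun _ => 0) /\
     forall omega, is_NE L lam k1 k2 mu1 mu2 s21 s22 x1 x2 p1 p2 kl kq kp d omega ->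
       {ae @lebesgue_measure R, forall x, x \in `[- L, L] -> omega x = 0}) /\
  (pmin - pmax <= p1 - p2 <= thetaL ->
     is_NE L lam k1 k2 mu1 mu2 s21 s22 x1 x2 p1 p2 kl kq kp d (fun _ => 1) /\
     forall omega, is_NE L lam k1 k2 mu1 mu2 s21 s22 x1 x2 p1 p2 kl kq kp d omega ->
       {ae @lebesgue_measure R, forall x, x \in `[- L, L] -> omega x = 1}).
Proof.
move=> L_gt0 lam_gt0 k1_gt0 k2_gt0 mu1_gt0 mu2_gt0 s21_ge0 s22_ge0 _ x12 _ _ _
  kl_gt0 kq_gt0 kp_gt0 d_gt0 full1 full2 thetaL thetaR.
have kpd_gt0 : 0 < kp * d by rewrite mulr_gt0.
split=> [/andP[gapR _] | /andP[_ gapL]].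
- apply: station2_dominant => //.
  by move: gapR; rewrite /thetaR ler_pdivrMr //; lra.
- apply: station1_dominant => //.
  by move: gapL; rewrite /thetaL ler_pdivlMr //; lra.
Qed.
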